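(* Let $\mathcal L$ be the Laplacian mechanism, let $c_1,\ldots,c_n>0$, and let the contract functions be $W_i(\varepsilon)=c_i\varepsilon$ for $i=1,\ldots,n$. Define micro-payments $\mu_i(\mathbf Q)=\frac{\gamma c_i}{\sqrt{v/2}}|q_i|$ for $\mathbf Q=(\mathbf q,v)$, $i=1,\ldots,n$. Then $(\boldsymbol\varepsilon,\boldsymbol\mu,\mathbf W)$ is semi-balanced: each $\mu_i$ is fair, micro arbitrage-free, and compensating for $W_i$ with respect to $\mathcal L$.
   Context: Fix a bounded set $X\subseteq\mathbb R$ and let $\gamma=\sup_{x\in X}|x|$. Databases are vectors $\mathbf x\in X^n$; $\mathbf x^{(i)}$ is $\mathbf x$ with the $i$-th coordinate replaced by $0$. Queries are pairs $\mathbf Q=(\mathbf q,v)$ with $\mathbf q\in\mathbb R^n$ and $v\in(0,\infty)$. The Laplacian mechanism answers $\mathbf Q$ by $\mathcal L_{\mathbf Q}(\mathbf x)=\mathbf q\cdot\mathbf x+\rho$, where $\rho$ has the Laplace density $\frac{1}{2b}e^{-|t|/b}$ with $b=\sqrt{v/2}$. The privacy loss of item $i$ is $\varepsilon_i(\mathcal L_{\mathbf Q})=\sup_{S,\mathbf x}\left|\log\frac{\Pr[\mathcal L_{\mathbf Q}(\mathbf x)\in S]}{\Pr[\mathcal L_{\mathbf Q}(\mathbf x^{(i)})\in S]}\right|$ over $\mathbf x\in X^n$ and measurable $S\subseteq\mathbb R$. The determinacy relation $\mathbf S\rightarrow\mathbf Q$ (finite multisets of queries to queries) is the smallest relation satisfying: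 (Summation) $\{(\mathbf q_1,v_1),\ldots,(\mathbf q_k,v_k)\}\rightarrow(\sum_j\mathbf q_j,\sum_jv_j)$; (Scalar multiplication) $\{(\mathbf q,v)\}\rightarrow(c\mathbf q,c^2v)$ for $c\in\mathbb R$; (Relaxation) $\{(\mathbf q,v)\}\rightarrow(\mathbf q,v')$ for $v\le v'$; (Transitivity) if $\mathbf S_j\rightarrow\mathbf Q_j$ for $j=1,\ldots,k$ and $\{\mathbf Q_1,\ldots,\mathbf Q_k\}\rightarrow\mathbf Q$ then $\mathbf S_1\uplus\cdots\uplus\mathbf S_k\rightarrow\mathbf Q$. A function $\mu$ from queries to $[0,\infty]$ is arbitrage-free if for every $m\ge 1$ and queries with $\{\mathbf Q_1,\ldots,\mathbf Q_m\}\rightarrow\mathbf Q$, $\mu(\mathbf Q)\le\sum_j\mu(\mathbf Q_j)$. A micro-payment $\mu_i$ is fair if $q_i=0$ implies $\mu_i(\mathbf q,v)=0$; micro arbitrage-free if $\mu_i$ is arbitrage-free; compensating for the contract $W_i$ (w.r.t. mechanism $\mathcal L$) if $\mu_i(\mathbf Q)\ge W_i(\varepsilon_i(\mathcal L_{\mathbf Q}))$ for every query $\mathbf Q$. *)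

From HB Require Import structures.
From mathcomp Require Import all_boot all_order all_algebra.
From mathcomp Require Import all_classical all_reals all_analysis.
Set Implicit Arguments. Unset Strict Implicit. Unset Printing Implicit Defensive.
Import Order.TTheory GRing.Theory Num.Theory.
Import numFieldNormedType.Exports.
Local Open Scope classical_set_scope.
Local Open Scope ring_scope.

(* A query (q, v): q a row vector of length n, v the variance (valid iff v > 0). *)
Definition query (R : realType) (n : nat) := ('rV[R]_n * R)%type.

Definition dotq {R : realType} {n : nat} (q x : 'rV[R]_n) : R :=
  \sum_(j < n) q 0 j * x 0 j.

Definition zero_at {R : realType} {n : nat} (x : 'rV[R]_n) (i : 'I_n) : 'rV[R]_n :=
  \row_j (if j == i then 0 else x 0 j).

Definition lap_scale {R : realType} (v : R) : R := Num.sqrt (v / 2).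

Definition laplace_density {R : realType} (b t : R) : R :=
  (2 * b)^-1 * expR (- `|t| / b).

(* Pr[ L_Q(x) \in S ] = Pr[ q.x + rho \in S ], rho ~ Laplace(b), b = sqrt(v/2) *)
Definition laplace_prob {R : realType} {n : nat} (Q : query R n) (x : 'rV[R]_n)
  (S : set R) : \bar R :=
  let D := [set r : R | S (dotq Q.1 x + r)%R] in
  (\int[@lebesgue_measure R]_(r in D)
      (laplace_density (lap_scale Q.2) r)%:E)%E.

(* The supremum ranges over measurable S on which the two probabilities are
   positive (so that the log-ratio is defined). *)
Definition privacy_loss {R : realType} {n : nat} (X : set R) (Q : query R n)
  (i : 'I_n) : \bar R :=
  ereal_sup [set e : \bar R | exists (S : set R) (x : 'rV[R]_n),
    [/\ measurable S, (forall j, X (x 0 j)),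
        (0 < laplace_prob Q x S)%E, (0 < laplace_prob Q (zero_at x i) S)%E &
        e = (`| ln (fine (laplace_prob Q x S) / fine (laplace_prob Q (zero_at x i) S)) |)%:E]].

(* The determinacy relation, multisets represented as sequences up to permutation.
   Only valid queries (v > 0) are ever related. *)
Inductive determines {R : realType} {n : nat} : seq (query R n) -> query R n -> Prop :=
| det_sum (k : nat) (Qs : 'I_k -> query R n) :
    (0 < k)%N -> (forall j, 0 < (Qs j).2) ->
    determines [seq Qs j | j <- enum 'I_k]
               (\sum_(j < k) (Qs j).1, \sum_(j < k) (Qs j).2)
| det_scale (q : 'rV[R]_n) (v c : R) :
    0 < v -> c != 0 -> determines [:: (q, v)] (c *: q, c ^+ 2 * v)
| det_relax (q : 'rV[R]_n) (v v' : R) :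
    0 < v -> v <= v' -> determines [:: (q, v)] (q, v')
| det_trans (k : nat) (Ss : 'I_k -> seq (query R n)) (Qs : 'I_k -> query R n)
    (Q : query R n) :
    (forall j, determines (Ss j) (Qs j)) ->
    determines [seq Qs j | j <- enum 'I_k] Q ->
    determines (flatten [seq Ss j | j <- enum 'I_k]) Q
| det_perm (s s' : seq (query R n)) (Q : query R n) :
    perm_eq s s' -> determines s Q -> determines s' Q.

Definition arbitrage_free {R : realType} {n : nat} (mu : query R n -> \bar R) : Prop :=
  forall (s : seq (query R n)) (Q : query R n),
    (0 < size s)%N -> determines s Q -> (mu Q <= \sum_(Q' <- s) mu Q')%E.

Definition fair {R : realType} {n : nat} (i : 'I_n) (mu : query R n -> \bar R) : Prop :=
  forall (q : 'rV[R]_n) (v : R), 0 < v -> q 0 i = 0 -> mu (q, v) = 0%E.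

Definition compensating {R : realType} {n : nat} (X : set R) (i : 'I_n)
  (W : \bar R -> \bar R) (mu : query R n -> \bar R) : Prop :=
  forall (q : 'rV[R]_n) (v : R), 0 < v -> (W (privacy_loss X (q, v) i) <= mu (q, v))%E.

Definition gamma {R : realType} (X : set R) : R := sup [set `|x| | x in X].

Definition linear_contract {R : realType} (c : R) (e : \bar R) : \bar R := (c%:E * e)%E.

Definition lap_micro_payment {R : realType} {n : nat} (X : set R) (c : 'I_n -> R)
  (i : 'I_n) (Q : query R n) : \bar R :=
  (gamma X * c i / Num.sqrt (Q.2 / 2) * `|Q.1 0 i|)%:E.

From HB Require Import structures.
From mathcomp Require Import all_boot all_order all_algebra.
From mathcomp Require Import all_classical all_reals all_analysis.
From mathcomp Require Import measurable_realfun.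
From mathcomp Require Import ring lra.
Set Implicit Arguments. Unset Strict Implicit. Unset Printing Implicit Defensive.
Import Order.TTheory GRing.Theory Num.Theory.
Local Open Scope classical_set_scope.
Local Open Scope ring_scope.

(* Translation invariance of Lebesgue measure turns the answer distribution on a
   database into that on a neighbouring database shifted by
   [q.x - q.x^(i) = q_i x_i]; since [|r| <= |r + t| + |t|], the Laplace density
   changes by a factor at most [exp(|q_i x_i| / b)] under such a shift, which
   bounds the privacy loss by [gamma |q_i| / b] and hence the contract by the
   micro-payment.  Arbitrage-freeness holds because [|q_i| / sqrt(v/2)] is
   subadditive under summation, invariant under scaling and nonincreasing
   under relaxation, all of which propagate through the determinacy relation. *)

Section LebesgueTranslation.
Context {R : realType}.
Local Notation mu := (@lebesgue_measure R).

Lemma measurable_addr (t : R) : measurable_fun [set: measurableTypeR R]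
  ((fun x : R => x + t) : measurableTypeR R -> measurableTypeR R).
Proof. by apply: measurable_funD => //; exact: measurable_cst. Qed.

Lemma lebesgue_measure_addr (t : R) (A : set R) : measurable A ->
  pushforward mu ((fun x : R => x + t) : _ -> measurableTypeR R) A = mu A.
Proof.
move=> mA; apply/esym/lebesgue_measure_unique => //=; first exact: measurable_addr.
move=> _ _ [[a b]] _ <-; rewrite /pushforward.
have -> : (fun x : R => x + t) @^-1` `]a, b]%classic = `](a - t), (b - t)]%classic.
  by apply/seteqP; split => x /=; rewrite !in_itv /= ltrBlDr lerBrDr.
rewrite !lebesgue_measure_itv /= !lte_fin ltrD2r.
by case: ifP => //= _; rewrite -EFinD; congr EFin; rewrite opprB addrA subrK.
Qed.

Lemma ge0_integral_addr (t : R) (D : set R) (f : R -> \bar R) :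
  measurable D -> measurable_fun D f -> (forall x, D x -> (0 <= f x)%E) ->
  (\int[mu]_(x in D) f x =
   \int[mu]_(x in (fun x : R => x + t)%R @^-1` D) f (x + t)%R)%E.
Proof.
move=> mD mf f0; transitivity (\int[pushforward mu
  ((fun x : R => x + t)%R : _ -> measurableTypeR R)]_(x in D) f x)%E.
  apply: eq_measure_integral; first exact: measurable_addr.
  by move=> mph A mA _; exact/esym/lebesgue_measure_addr.
rewrite ge0_integral_pushforward //; first exact: measurable_addr.
by move=> y /set_mem; exact: f0.
Qed.

End LebesgueTranslation.

Section LaplaceMechanism.
Context {R : realType}.
Local Notation mu := (@lebesgue_measure R).

Lemma measurable_laplace_density (b : R) :
  measurable_fun [set: R] (laplace_density b).
Proof.
apply: measurable_funM => //; apply: measurableT_comp; first exact: measurable_expR.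
by apply: measurable_funM => //; exact: measurableT_comp.
Qed.

Lemma laplace_density_ge0 (b r : R) : 0 <= b -> 0 <= laplace_density b r.
Proof. by move=> b0; rewrite mulr_ge0 ?expR_ge0 // invr_ge0 mulr_ge0. Qed.

Lemma laplace_density_le_shift (b r t : R) : 0 < b ->
  laplace_density b r <= expR (`|t| / b) * laplace_density b (r + t).
Proof.
move=> b0; rewrite /laplace_density mulrCA -expRD ler_wpM2l //.
  by rewrite invr_ge0 mulr_ge0 // ltW.
rewrite ler_expR -mulrDl; apply: ler_wpM2r; first by rewrite invr_ge0 ltW.
have := ler_normD r t; lra.
Qed.

Lemma measurable_translate (S : set R) (a : R) : measurable S ->
  measurable [set r | S (a + r)].
Proof.
move=> mS; rewrite (_ : [set r | S (a + r)] = (fun r => r + a) @^-1` S).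
  by have := measurable_addr a measurableT mS; rewrite setTI.
by apply/funext => r /=; rewrite addrC.
Qed.

Lemma laplace_mass_le_shift (b a a' : R) (S : set R) : 0 < b -> measurable S ->
  (\int[mu]_(r in [set r | S (a + r)%R]) (laplace_density b r)%:E <=
   (expR (`|a - a'| / b))%:E *
     \int[mu]_(r in [set r | S (a' + r)%R]) (laplace_density b r)%:E)%E.
Proof.
move=> b0 mS.
have mf : measurable_fun [set: R] (fun r => (laplace_density b r)%:E).
  by apply/measurable_EFinP; exact: measurable_laplace_density.
have f0 r : (0 <= (laplace_density b r)%:E)%E.
  by rewrite lee_fin laplace_density_ge0 // ltW.
rewrite (ge0_integral_addr (a - a') (measurable_translate a' mS)) //; last first.
  exact: measurable_funTS.
have -> : (fun r => r + (a - a')) @^-1` [set r | S (a' + r)] = [set r | S (a + r)].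
  by apply/funext => r /=; congr S; ring.
rewrite -ge0_integralZl_EFin //; first last.
- by apply/measurable_funTS/measurable_EFinP/measurableT_comp;
    [exact: measurable_laplace_density | exact: measurable_addr].
- exact: measurable_translate.
apply: ge0_le_integral => //; first exact: measurable_translate.
- exact: measurable_funTS.
- by apply/measurable_funTS/measurable_funeM; apply/measurable_EFinP/measurableT_comp;
    [exact: measurable_laplace_density | exact: measurable_addr].
- by move=> r _; rewrite -EFinM lee_fin laplace_density_le_shift.
Qed.

Lemma abs_ln_ratio_le (p p' : \bar R) (d : R) : 0 <= d -> (0 < p)%E -> (0 < p')%E ->
  (p <= (expR d)%:E * p')%E -> (p' <= (expR d)%:E * p)%E ->
  `|ln (fine p / fine p')| <= d.
Proof.
move=> d0; case: p => [r| |] //; case: p' => [r'| |] //=; last first.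
  by rewrite mul0r ln0 // normr0.
rewrite !lte_fin -!EFinM !lee_fin => r0 r'0 le_rr' le_r'r.
rewrite ler_norml; apply/andP; split.
  rewrite -[X in X <= _](expRK (- d)) ler_ln ?posrE ?expR_gt0 ?divr_gt0 //.
  by rewrite expRN ler_pdivlMr // mulrC ler_pdivrMr ?expR_gt0 // mulrC.
rewrite -[X in _ <= X](expRK d) ler_ln ?posrE ?expR_gt0 ?divr_gt0 //.
by rewrite ler_pdivrMr.
Qed.

Lemma dotqB_zero_at n (q x : 'rV[R]_n) (i : 'I_n) :
  dotq q x - dotq q (zero_at x i) = q 0 i * x 0 i.
Proof.
rewrite /dotq -sumrB (bigD1 i) //= big1 ?addr0.
  by rewrite mxE eqxx mulr0 subr0.
by move=> j /negbTE ji; rewrite mxE ji subrr.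
Qed.

Lemma ler_norm_gamma (X : set R) (M x : R) :
  (forall y, X y -> `|y| <= M) -> X x -> `|x| <= gamma X.
Proof.
move=> XM Xx; apply: sup_upper_bound; last by exists x.
by split; [exists `|x|, x | exists M => _ [y Xy <-]; exact: XM].
Qed.

Lemma gamma_ge0 (X : set R) (M : R) : (forall y, X y -> `|y| <= M) -> 0 <= gamma X.
Proof.
move=> XM; have [[x Xx]|nX] := pselect (exists x, X x).
  exact: le_trans (normr_ge0 x) (ler_norm_gamma XM Xx).
rewrite /gamma (_ : [set `|x| | x in X] = set0) ?sup0 //.
by apply/seteqP; split => // z [x Xx _]; apply: nX; exists x.
Qed.

Lemma privacy_loss_le n (X : set R) (M : R) (q : 'rV[R]_n) (v : R) (i : 'I_n) :
  (forall y, X y -> `|y| <= M) -> 0 < v ->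
  (privacy_loss X (q, v) i <= (gamma X * `|q 0 i| / lap_scale v)%:E)%E.
Proof.
move=> XM v0; have b0 : 0 < lap_scale v by rewrite sqrtr_gt0 divr_gt0.
apply: ge_ereal_sup => _ [S [x [mS Xx p0 p0' ->]]]; rewrite lee_fin.
set d := `|dotq q x - dotq q (zero_at x i)| / lap_scale v.
apply: (@le_trans _ _ d); first apply: abs_ln_ratio_le _ p0 p0' _ _.
- by rewrite /d divr_ge0 // ltW.
- exact: laplace_mass_le_shift.
- by rewrite /d distrC; exact: laplace_mass_le_shift.
apply: ler_wpM2r; first by rewrite invr_ge0 ltW.
by rewrite dotqB_zero_at normrM mulrC ler_wpM2r // (ler_norm_gamma XM (Xx i)).
Qed.

End LaplaceMechanism.

Section Determinacy.
Context {R : realType} {n : nat}.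

Definition noise_ratio (i : 'I_n) (Q : query R n) : R := `|Q.1 0 i| / lap_scale Q.2.

Lemma lap_micro_paymentE (X : set R) (c : 'I_n -> R) (i : 'I_n) (Q : query R n) :
  lap_micro_payment X c i Q = (gamma X * c i * noise_ratio i Q)%:E.
Proof. by rewrite /lap_micro_payment /noise_ratio mulrAC mulrA. Qed.

Lemma ler_div_lap_scale (a v v' : R) : 0 <= a -> 0 < v -> v <= v' ->
  a / lap_scale v' <= a / lap_scale v.
Proof.
move=> a0 v0 vv'; apply: ler_wpM2l => //.
have v'0 : 0 < v' := lt_le_trans v0 vv'.
rewrite lef_pV2 ?posrE ?sqrtr_gt0 ?divr_gt0 //.
rewrite /lap_scale ler_sqrt ?divr_ge0 ?(ltW v0) ?(ltW v'0) //.
by rewrite ler_wpM2r ?invr_ge0.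
Qed.

Lemma noise_ratio_determines (i : 'I_n) (s : seq (query R n)) (Q : query R n) :
  determines s Q -> noise_ratio i Q <= \sum_(Q' <- s) noise_ratio i Q'.
Proof.
rewrite /noise_ratio; elim => {s Q} /=.
- move=> k Qs _ Qs_gt0; rewrite big_map big_enum /= summxE.
  have le_sum j : (Qs j).2 <= \sum_(l < k) (Qs l).2.
    by rewrite (bigD1 j) //= lerDl sumr_ge0 // => l _; exact: ltW.
  apply: (@le_trans _ _ ((\sum_(j < k) `|(Qs j).1 0 i|) /
      lap_scale (\sum_(j < k) (Qs j).2))).
    by apply: ler_wpM2r; [rewrite invr_ge0 sqrtr_ge0 | exact: ler_norm_sum].
  by rewrite mulr_suml; apply: ler_sum => j _; exact: ler_div_lap_scale.
- move=> q v c _ c0; rewrite big_seq1 /= mxE normrM /lap_scale -mulrA.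
  rewrite sqrtrM ?sqr_ge0 // sqrtr_sqr invfM mulrACA mulfV ?normr_eq0 //.
  by rewrite mul1r.
- by move=> q v v' v0 vv'; rewrite big_seq1 ler_div_lap_scale.
- move=> k Ss Qs Q _ le_Ss _ le_Qs; apply: le_trans le_Qs _.
  rewrite big_map big_flatten /= big_map.
  by apply: ler_sum => j _; exact: le_Ss.
- by move=> s s' Q ss' _ le_s; rewrite -(perm_big _ ss').
Qed.

End Determinacy.

Theorem proposition9 (R : realType) (n : nat) (X : set R) (c : 'I_n -> R) :
  (exists M : R, forall x, X x -> `|x| <= M) ->
  (forall i, 0 < c i) ->
  forall i : 'I_n,
    [/\ fair i (lap_micro_payment X c i),
        arbitrage_free (lap_micro_payment X c i) &
        compensating X i (linear_contract (c i)) (lap_micro_payment X c i)].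
Proof.
move=> [M XM] c_gt0 i; have gc0 : 0 <= gamma X * c i.
  by rewrite mulr_ge0 ?(gamma_ge0 XM) ?ltW.
split.
- by move=> q v _ qi0; rewrite /lap_micro_payment /= qi0 normr0 mulr0.
- move=> s Q _ sQ; rewrite lap_micro_paymentE.
  under eq_bigr do rewrite lap_micro_paymentE.
  rewrite sumEFin lee_fin -mulr_sumr ler_wpM2l //.
  exact: noise_ratio_determines.
- move=> q v v0; rewrite /linear_contract lap_micro_paymentE.
  apply: le_trans (lee_wpmul2l _ (privacy_loss_le q i XM v0)) _.
    by rewrite lee_fin ltW.
  by rewrite -EFinM lee_fin /noise_ratio /= -!mulrA mulrCA.
Qed.
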